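(* Let $\alpha,\beta$ be real (or complex) parameters and let $n,k$ be non-negative integers. Let $\Omega_{n,k}$ be the set of all partitions of $\{1,\ldots,n\}$ into $k$ non-empty blocks, the blocks being unordered among themselves but each block being arranged as a linear list (sequence). For $\varepsilon\in\Omega_{n,k}$ define its weight $w(\varepsilon)$ as the product over all elements $e\in\{1,\ldots,n\}$ of the weight of $e$, where an element $e$ has weight $1$ if $e$ is the smallest element of its list, weight $\beta$ if $e$ is not the smallest element of its list but appears in the list before every element of its list that is smaller than $e$, and weight $\alpha$ otherwise. (Equivalently, the lists are built by inserting $1,2,\ldots,n$ one at a time: starting a new list costs $1$, inserting at the head of an existing list costs $\beta$, inserting immediately after an already placed element costs $\alpha$.) Then $$\genfrac{\lfloor}{\rfloor}{0pt}{}{n}{k}^{\alpha,\beta}=\sum_{\varepsilon\in\Omega_{n,k}} w(\varepsilon).$$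
   Context: For parameters $\alpha,\beta$, the generalized Stirling (Lah-type) numbers $\genfrac{\lfloor}{\rfloor}{0pt}{}{n}{k}^{\alpha,\beta}$, $0\le k\le n$, are defined by the polynomial identity in $x$ $$x(x+\alpha)(x+2\alpha)\cdots(x+(n-1)\alpha)=\sum_{k=0}^{n}\genfrac{\lfloor}{\rfloor}{0pt}{}{n}{k}^{\alpha,\beta}\,x(x-\beta)(x-2\beta)\cdots(x-(k-1)\beta),$$ (empty products equal $1$), and $\genfrac{\lfloor}{\rfloor}{0pt}{}{n}{k}^{\alpha,\beta}=0$ for $k<0$ or $k>n$. In particular $\genfrac{\lfloor}{\rfloor}{0pt}{}{0}{0}^{\alpha,\beta}=1$ and $\genfrac{\lfloor}{\rfloor}{0pt}{}{n}{0}^{\alpha,\beta}=0$ for $n\ge1$. *)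

From HB Require Import structures.
From mathcomp Require Import all_boot all_order all_algebra.
Set Implicit Arguments. Unset Strict Implicit. Unset Printing Implicit Defensive.
Import Order.TTheory GRing.Theory Num.Theory.
Local Open Scope ring_scope.

Definition rise_poly (R : comRingType) (a : R) (n : nat) : {poly R} :=
  \prod_(i < n) ('X + (i%:R * a)%:P).

Definition fall_poly (R : comRingType) (b : R) (k : nat) : {poly R} :=
  \prod_(i < k) ('X - (i%:R * b)%:P).

Definition is_gstirling (R : comRingType) (a b : R) (n : nat) (c : nat -> R) : Prop :=
  rise_poly a n = \sum_(k < n.+1) c k *: fall_poly b k.

(* A partition of the ground set 'I_n (standing for {1..n}, order preserved)
   into blocks, each arranged as a linear list, is encoded by the strict
   "appears before, in the same list" relation  r : {set 'I_n * 'I_n}: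
   (e, f) \in r  iff  e and f lie in the same list and e comes before f.
   Such r are exactly the strict partial orders whose comparability relation
   is transitive (each block is a chain, i.e. linearly ordered). *)
Definition same_block (n : nat) (r : {set 'I_n * 'I_n}) (e f : 'I_n) : bool :=
  [|| e == f, (e, f) \in r | (f, e) \in r].

Definition is_list_partition (n : nat) (r : {set 'I_n * 'I_n}) : bool :=
  [&& [forall e : 'I_n, (e, e) \notin r],
      [forall e : 'I_n, forall f : 'I_n, forall g : 'I_n,
         ((e, f) \in r) && ((f, g) \in r) ==> ((e, g) \in r)] &
      [forall e : 'I_n, forall f : 'I_n, forall g : 'I_n,
         same_block r e f && same_block r f g ==> same_block r e g]].

Definition blocks (n : nat) (r : {set 'I_n * 'I_n}) : {set {set 'I_n}} :=
  [set [set f | same_block r e f] | e : 'I_n].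

Definition Omega (n k : nat) : {set {set 'I_n * 'I_n}} :=
  [set r | is_list_partition r && (#|blocks r| == k)].

Definition elt_weight (R : comRingType) (a b : R) (n : nat)
    (r : {set 'I_n * 'I_n}) (e : 'I_n) : R :=
  if [forall f : 'I_n, same_block r e f ==> (e <= f)%N] then 1
  else if [forall f : 'I_n, (same_block r e f && (f < e)%N) ==> ((e, f) \in r)]
  then b else a.

Definition weight (R : comRingType) (a b : R) (n : nat) (r : {set 'I_n * 'I_n}) : R :=
  \prod_(e : 'I_n) elt_weight a b r e.

Definition weight_sum (R : comRingType) (a b : R) (n k : nat) : R :=
  \sum_(r in Omega n k) weight a b r.

From mathcomp Require Import all_boot all_algebra.
Import GRing.Theory.
Local Open Scope ring_scope.

Set Implicit Arguments. Unset Strict Implicit. Unset Printing Implicit Defensive.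

(* Removing the largest element from a list partition of {1..n+1} leaves a
   list partition of {1..n}, and the largest element was either alone in its
   list (weight 1, one more list), placed right after one of the n other
   elements (weight alpha), or put in front of one of the k lists (weight
   beta).  Counting lists by their first elements, this gives
     W(n+1,k) = W(n,k-1) + (n alpha + k beta) W(n,k),
   which is also the recurrence of the coefficients of x(x+alpha)...(x+n alpha)
   in the falling products, as
     x(x-beta)...(x-(k-1)beta) (x + n alpha)
       = x(x-beta)...(x-k beta) + (n alpha + k beta) x(x-beta)...(x-(k-1)beta).
   The falling products are monic of distinct degrees, so the coefficients
   are unique. *)

Section ListPartition.
Variables (m : nat) (r : {set 'I_m * 'I_m}).

Lemma list_partitionP : reflect
  [/\ forall e, (e, e) \notin r,
      forall e f g, (e, f) \in r -> (f, g) \in r -> (e, g) \in r &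
      forall e f g, same_block r e f -> same_block r f g -> same_block r e g]
  (is_list_partition r).
Proof.
apply: (iffP and3P) => [[/forallP irr /forallP tr /forallP sb]|[irr tr sb]].
  split=> // e f g ef fg.
  - by have /forallP/(_ f)/forallP/(_ g) := tr e; rewrite ef fg; apply.
  - by have /forallP/(_ f)/forallP/(_ g) := sb e; rewrite ef fg; apply.
split; apply/forallP => e //; do 2 apply/forallP => ?; apply/implyP => /andP[].
- exact: tr.
- exact: sb.
Qed.

Lemma same_blockC e f : same_block r e f = same_block r f e.
Proof. by rewrite /same_block eq_sym [X in _ || X]orbC. Qed.

Lemma same_block_refl e : same_block r e e.
Proof. by rewrite /same_block eqxx. Qed.

Definition heads : {set 'I_m} := [set e | [forall f, (f, e) \notin r]].
Definition preds e : {set 'I_m} := [set f | (f, e) \in r].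
Definition succs e : {set 'I_m} := [set f | (e, f) \in r].

Lemma headsP h : reflect (forall f, (f, h) \notin r) (h \in heads).
Proof. by rewrite inE; apply: forallP. Qed.

End ListPartition.

Section ListPartitionFacts.
Context {m : nat} {r : {set 'I_m * 'I_m}} (r_lp : is_list_partition r).

Lemma lp_irrefl e : (e, e) \notin r.
Proof. by case/list_partitionP: r_lp. Qed.

Lemma lp_trans e f g : (e, f) \in r -> (f, g) \in r -> (e, g) \in r.
Proof. by case/list_partitionP: r_lp => _ tr _; apply: tr. Qed.

Lemma lp_same_block_trans e f g :
  same_block r e f -> same_block r f g -> same_block r e g.
Proof. by case/list_partitionP: r_lp => _ _ sb; apply: sb. Qed.

Lemma card_preds_lt g h : (g, h) \in r -> (#|preds r g| < #|preds r h|)%N.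
Proof.
move=> gh; apply/proper_card/properP; split; last by exists g; rewrite !inE ?lp_irrefl.
by apply/subsetP => x; rewrite !inE => /lp_trans; apply.
Qed.

Lemma exists_head e : exists2 h, h \in heads r & same_block r e h.
Proof.
have [h eh hmin] := arg_minnP (fun f => #|preds r f|) (same_block_refl r e).
exists h => //; apply/headsP => g; apply/negP => gh.
have /hmin : same_block r e g by apply: lp_same_block_trans eh _; rewrite /same_block gh !orbT.
by rewrite leqNgt card_preds_lt.
Qed.

Lemma card_blocks : #|blocks r| = #|heads r|.
Proof.
have -> : blocks r = [set [set f | same_block r e f] | e in heads r].
  apply/setP => B; apply/imsetP/imsetP => [[e _ ->]|[e _ ->]]; last by exists e.
  have [h hH eh] := exists_head e; exists h => //.
  apply/setP => f; rewrite !inE; apply/idP/idP; last exact: lp_same_block_trans.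
  by apply: lp_same_block_trans; rewrite same_blockC.
apply: card_in_imset => h1 h2 /headsP h1H /headsP h2H E.
have : h2 \in [set f | same_block r h1 f] by rewrite E inE same_block_refl.
by rewrite inE /same_block (negbTE (h1H _)) (negbTE (h2H _)) !orbF => /eqP.
Qed.

End ListPartitionFacts.

Lemma in_Omega m k (r : {set 'I_m * 'I_m}) :
  (r \in Omega m k) = is_list_partition r && (#|heads r| == k).
Proof. by rewrite inE; case r_lp : (is_list_partition r); rewrite //= card_blocks. Qed.

Section Insertion.
Variable n : nat.
Local Notation new := (@ord_max n).
Local Notation old := (lift new).

Definition insert_max (r : {set 'I_n * 'I_n}) (P S : {set 'I_n}) :
    {set 'I_n.+1 * 'I_n.+1} :=
  [set p | match unlift new p.1, unlift new p.2 with
           | Some i, Some j => (i, j) \in r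
           | Some i, None => i \in P
           | None, Some j => j \in S
           | None, None => false end].

Variables (r : {set 'I_n * 'I_n}) (P S : {set 'I_n}).
Local Notation r' := (insert_max r P S).

Lemma insert_old_old i j : ((old i, old j) \in r') = ((i, j) \in r).
Proof. by rewrite inE /= !liftK. Qed.

Lemma insert_old_new i : ((old i, new) \in r') = (i \in P).
Proof. by rewrite inE /= liftK unlift_none. Qed.

Lemma insert_new_old j : ((new, old j) \in r') = (j \in S).
Proof. by rewrite inE /= liftK unlift_none. Qed.

Lemma insert_new_new : ((new, new) \in r') = false.
Proof. by rewrite inE /= unlift_none. Qed.

Lemma same_block_old_old i j : same_block r' (old i) (old j) = same_block r i j.
Proof. by rewrite /same_block (inj_eq lift_inj) !insert_old_old. Qed.

Lemma same_block_old_new i : same_block r' (old i) new = (i \in P) || (i \in S).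
Proof. by rewrite /same_block lift_eqF insert_old_new insert_new_old. Qed.

Lemma same_block_new_old i : same_block r' new (old i) = (i \in P) || (i \in S).
Proof. by rewrite same_blockC same_block_old_new. Qed.

Definition insertE := (insert_old_old, insert_old_new, insert_new_old, insert_new_new,
  same_block_old_old, same_block_old_new, same_block_new_old, same_block_refl).

(* [P] and [S] cut one list of [r] (none, if both are empty) into an initial
   and a final segment. *)
Definition insertable : Prop :=
  [/\ forall i j, i \in P -> j \in S -> (i, j) \in r,
      forall i j, (i, j) \in r -> j \in P -> i \in P,
      forall i j, (i, j) \in r -> i \in S -> j \in S,
      forall i j, (i \in P) || (i \in S) -> (j \in P) || (j \in S) -> same_block r i j &
      forall i j, (i \in P) || (i \in S) -> same_block r i j -> (j \in P) || (j \in S)].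

Lemma list_partition_insert :
  is_list_partition r -> insertable -> is_list_partition r'.
Proof.
move=> r_lp [PS Pdown Sup PSblock PSclosed]; apply/list_partitionP; split.
- by move=> e; case: (unliftP new e) => [e'|] ->; rewrite insertE ?lp_irrefl.
- move=> e f g; case: (unliftP new e) => [e'|] ->; case: (unliftP new f) => [f'|] ->;
  case: (unliftP new g) => [g'|] ->; rewrite ?insertE // => ef fg;
  first [exact: lp_trans ef fg | exact: Pdown ef fg | exact: PS ef fg
         | exact: Sup fg ef | by have := lp_irrefl r_lp f'; rewrite (PS _ _ fg ef)].
- move=> e f g; case: (unliftP new e) => [e'|] ->; case: (unliftP new f) => [f'|] ->;
  case: (unliftP new g) => [g'|] ->; rewrite ?insertE // => ef fg;
  first [exact: lp_same_block_trans ef fg | exact: PSblock ef fg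
         | exact: PSclosed ef fg | exact: PSclosed fg ef
         | by apply: PSclosed fg _; rewrite same_blockC].
Qed.

Lemma list_partition_insert_inv :
  is_list_partition r' -> is_list_partition r /\ insertable.
Proof.
case/list_partitionP => irr tr sb; split; first (apply/list_partitionP; split).
- by move=> e; have := irr (old e); rewrite insertE.
- by move=> e f g; have := tr (old e) (old f) (old g); rewrite !insertE; apply.
- by move=> e f g; have := sb (old e) (old f) (old g); rewrite !insertE; apply.
split=> i j.
- by have := tr (old i) new (old j); rewrite !insertE; apply.
- by have := tr (old i) (old j) new; rewrite !insertE; apply.
- by move=> ij iS; have := tr new (old i) (old j); rewrite !insertE; apply.
- by have := sb (old i) new (old j); rewrite !insertE; apply.
- by have := sb new (old i) (old j); rewrite !insertE; apply.
Qed.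

End Insertion.

Section InsertionWeight.
Variable n : nat.
Local Notation new := (@ord_max n).
Local Notation old := (lift new).

Lemma val_old (i : 'I_n) : old i = i :> nat.
Proof. exact: lift_max. Qed.

Lemma forall_old_new (p : pred 'I_n.+1) :
  [forall x, p x] = [forall i : 'I_n, p (old i)] && p new.
Proof.
apply/forallP/andP => [p_all|[/forallP p_old p_new] x]; first by split=> //; apply/forallP.
by case: (unliftP new x) => [i|] ->.
Qed.

Lemma card_old_new (A : {set 'I_n.+1}) :
  #|A| = (#|[set i | old i \in A]| + (new \in A))%N.
Proof.
rewrite -!sum1_card big_mkcond big_ord_recr /= [in RHS]big_mkcond /=.
congr (_ + _)%N; apply: eq_bigr => i _; rewrite inE.
by congr (if _ \in A then _ else _); exact/val_inj/esym/val_old.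
Qed.

Variables (R : comNzRingType) (a b : R) (r : {set 'I_n * 'I_n}) (P S : {set 'I_n}).
Local Notation r' := (insert_max r P S).

Lemma elt_weight_insert_old (i : 'I_n) : elt_weight a b r' (old i) = elt_weight a b r i.
Proof.
have i_le_n : (i <= n)%N := ltnW (ltn_ord i).
rewrite /elt_weight !forall_old_new !insertE !val_old i_le_n ltnNge i_le_n.
rewrite implybT andbF implyFb !andbT.
congr (if _ then _ else _); last congr (if _ then _ else _);
  by apply: eq_forallb => j; rewrite !insertE val_old.
Qed.

Lemma elt_weight_insert_new : is_list_partition r -> insertable r P S ->
  elt_weight a b r' new = if P == set0 then (if S == set0 then 1 else b) else a.
Proof.
move=> r_lp [PS _ _ _ _].
have first_in_list : [forall j, same_block r' new (old j) ==> (new <= old j)%N] =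
    (P :|: S == set0).
  rewrite set0_Nexists negb_exists; apply: eq_forallb => j.
  by rewrite same_block_new_old val_old leqNgt ltn_ord implybF inE.
have before_smaller :
    [forall j, same_block r' new (old j) && (old j < new)%N ==> ((new, old j) \in r')] =
    (P == set0).
  rewrite set0_Nexists negb_exists; apply: eq_forallb => j.
  rewrite same_block_new_old insert_new_old val_old ltn_ord andbT.
  case jP: (j \in P); rewrite /= ?implybb //; apply/negbTE/negP => jS.
  by have := lp_irrefl r_lp j; rewrite PS.
rewrite /elt_weight !forall_old_new first_in_list before_smaller !insertE ltnn leqnn.
by rewrite setU_eq0 !andbT; case: (P == set0); case: (S == set0).
Qed.

Lemma weight_insert_max : weight a b r' = weight a b r * elt_weight a b r' new.
Proof.
rewrite /weight big_ord_recr /=; congr (_ * _); apply: eq_bigr => i _.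
by rewrite -elt_weight_insert_old; congr elt_weight; exact/val_inj/esym/val_old.
Qed.

Lemma card_heads_insert_max : #|heads r'| = (#|heads r :\: S| + (P == set0))%N.
Proof.
rewrite card_old_new; congr (_ + nat_of_bool _)%N.
  apply/eq_card => i; rewrite !inE forall_old_new insert_new_old andbC.
  by congr (_ && _); apply: eq_forallb => j; rewrite insert_old_old.
rewrite inE forall_old_new insert_new_new andbT set0_Nexists negb_exists.
by apply: eq_forallb => j; rewrite insert_old_new.
Qed.

End InsertionWeight.

Lemma setU1_eq0 (T : finType) (x : T) (A : {set T}) : (x |: A == set0) = false.
Proof. by apply/negbTE/set0Pn; exists x; rewrite setU11. Qed.

Section Slots.
Variables (n : nat) (r : {set 'I_n * 'I_n}).
Hypothesis r_lp : is_list_partition r.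

Definition new_list_slot : {set 'I_n} * {set 'I_n} := (set0, set0).
Definition after_slot m : {set 'I_n} * {set 'I_n} := (m |: preds r m, succs r m).
Definition front_slot h : {set 'I_n} * {set 'I_n} := (set0, h |: succs r h).

Lemma insertable_block c (P S : {set 'I_n}) :
    (forall i, (i \in P) || (i \in S) = same_block r c i) ->
  (forall i j, (i \in P) || (i \in S) -> (j \in P) || (j \in S) -> same_block r i j) /\
  (forall i j, (i \in P) || (i \in S) -> same_block r i j -> (j \in P) || (j \in S)).
Proof.
move=> PS_block; split=> i j; rewrite !PS_block => ci; last exact: lp_same_block_trans.
by move=> cj; apply: (lp_same_block_trans r_lp _ cj); rewrite same_blockC.
Qed.

Lemma insertable_new_list : insertable r set0 set0.
Proof. by split=> i j; rewrite ?inE. Qed.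

Lemma insertable_after m : insertable r (after_slot m).1 (after_slot m).2.
Proof.
have block_m i : (i \in (after_slot m).1) || (i \in (after_slot m).2) = same_block r m i.
  rewrite !inE /same_block eq_sym.
  by case: (m == i); case: ((i, m) \in r); case: ((m, i) \in r).
have [PS_block PS_closed] := insertable_block block_m.
split=> // i j; rewrite !inE.
- by case/predU1P => [->|im] mj //; apply: lp_trans im mj.
- move=> ij /predU1P [<-|jm]; first by rewrite ij orbT.
  by rewrite (lp_trans r_lp ij jm) orbT.
- by move=> ij mi; apply: lp_trans mi ij.
Qed.

Lemma insertable_front h : h \in heads r -> insertable r (front_slot h).1 (front_slot h).2.
Proof.
move=> /headsP h_head.
have block_h i : (i \in (front_slot h).1) || (i \in (front_slot h).2) = same_block r h i.
  by rewrite !inE /same_block eq_sym (negbTE (h_head i)) orbF.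
have [PS_block PS_closed] := insertable_block block_h.
split=> // i j; rewrite !inE // => ij /predU1P [<-|hi]; first by rewrite ij orbT.
by rewrite (lp_trans r_lp hi ij) orbT.
Qed.

Lemma insertable_front_cases S : insertable r set0 S -> S != set0 ->
  exists2 h, h \in heads r & S = h |: succs r h.
Proof.
move=> [_ _ Sup PS_block PS_closed] /set0Pn [h0 h0S].
have [h hS h_min] := arg_minnP (fun f => #|preds r f|) h0S.
have {}hS : h \in S := hS.
have notin_preds i : i \in S -> (i, h) \notin r.
  by move=> iS; apply/negP => /(card_preds_lt r_lp); rewrite ltnNge h_min.
have h_head : h \in heads r.
  apply/headsP => g; apply/negP => gh.
  have : (g \in set0) || (g \in S).
    by apply: (PS_closed h); rewrite ?hS ?orbT // /same_block gh !orbT.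
  by rewrite inE => /notin_preds; rewrite gh.
exists h => //; apply/setP => i; rewrite !inE; apply/idP/idP => [iS|].
  have := PS_block h i; rewrite !in_set0 hS iS => /(_ isT isT).
  by rewrite /same_block eq_sym (negbTE (notin_preds i iS)) orbF.
by case/predU1P => [->|hi] //; apply: Sup hi hS.
Qed.

Lemma insertable_after_cases P S m0 : insertable r P S -> m0 \in P ->
  exists m, (P, S) = after_slot m.
Proof.
move=> [PS Pdown _ PS_block PS_closed] m0P.
have [m mP m_max] := arg_maxnP (fun f => #|preds r f|) m0P.
have {}mP : m \in P := mP.
have notin_succs i : i \in P -> (m, i) \notin r.
  move=> iP; apply/negP => /(card_preds_lt r_lp); apply/negP.
  by rewrite -leqNgt; exact: m_max.
have in_preds i : i \in P -> (i == m) || ((i, m) \in r).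
  move=> iP; have := PS_block m i; rewrite mP iP => /(_ isT isT).
  by rewrite /same_block eq_sym (negbTE (notin_succs i iP)).
exists m; congr (_, _); apply/setP => i; rewrite !inE; apply/idP/idP.
- exact: in_preds.
- by case/predU1P => [->|im] //; apply: Pdown im mP.
- exact: PS.
move=> mi; have /orP[iP|] // : (i \in P) || (i \in S).
  by apply: (PS_closed m); rewrite ?mP // /same_block mi orbT.
have [/eqP im|im] := orP (in_preds i iP).
  by rewrite im (negbTE (lp_irrefl r_lp m)) in mi.
by have := lp_irrefl r_lp i; rewrite (lp_trans r_lp im mi).
Qed.

Lemma insertable_cases P S : insertable r P S ->
  [\/ (P, S) = new_list_slot, exists m, (P, S) = after_slot m
    | exists2 h, h \in heads r & (P, S) = front_slot h].
Proof.
move=> PS_ins; have [P0|[m0 m0P]] := set_0Vmem P; last first.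
  by apply: Or32; apply: insertable_after_cases PS_ins m0P.
have [S0|S_neq0] := eqVneq S set0; first by apply: Or31; rewrite P0 S0.
rewrite P0 in PS_ins *; have [h h_head ->] := insertable_front_cases PS_ins S_neq0.
by apply: Or33; exists h.
Qed.

End Slots.

Section SlotSum.
Variables (n : nat) (r : {set 'I_n * 'I_n}).
Hypothesis r_lp : is_list_partition r.

Lemma list_partition_insert_slots :
  [set ps | is_list_partition (insert_max r ps.1 ps.2)] =
  new_list_slot n |: ([set after_slot r m | m : 'I_n] :|: [set front_slot r h | h in heads r]).
Proof.
apply/setP => -[P S]; rewrite !inE /=; apply/idP/idP.
  case/list_partition_insert_inv => _ /(insertable_cases r_lp) [->|[m ->]|[h h_head ->]].
  - by rewrite eqxx.
  - by rewrite imset_f ?orbT.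
  - by rewrite imset_f ?orbT.
case/or3P => [/eqP|/imsetP [m _]|/imsetP [h h_head]] [-> ->];
  apply: list_partition_insert => //.
- exact: insertable_new_list.
- exact: insertable_after.
- exact: insertable_front.
Qed.

Lemma after_slot_inj : injective (after_slot r).
Proof.
move=> m1 m2 [E _].
have : m1 \in m2 |: preds r m2 by rewrite -E setU11.
have : m2 \in m1 |: preds r m1 by rewrite E setU11.
rewrite !inE => /predU1P [->//|m21] /predU1P [->//|m12].
by have := lp_irrefl r_lp m1; rewrite (lp_trans r_lp m12 m21).
Qed.

Lemma front_slot_inj : {in heads r &, injective (front_slot r)}.
Proof.
move=> h1 h2 /headsP h1_head _ [E].
have : h1 \in h2 |: succs r h2 by rewrite -E setU11.
by rewrite !inE => /predU1P [//|h21]; have := h1_head h2; rewrite h21.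
Qed.

Variables (R : comNzRingType) (a b : R) (k : nat).

Definition slot_weight (ps : {set 'I_n} * {set 'I_n}) : R :=
  let r' := insert_max r ps.1 ps.2 in
  if #|heads r'| == k then elt_weight a b r' ord_max else 0.

Lemma slot_weight_new_list : slot_weight (new_list_slot n) = (#|heads r|.+1 == k)%:R.
Proof.
rewrite /slot_weight card_heads_insert_max /= setD0 eqxx addn1.
by rewrite elt_weight_insert_new ?eqxx //; [case: (_ == k) | exact: insertable_new_list].
Qed.

Lemma slot_weight_after m : slot_weight (after_slot r m) = (#|heads r| == k)%:R * a.
Proof.
have heads_succs : heads r :\: succs r m = heads r.
  apply/setP => h; rewrite in_setD andbC; case h_head: (h \in heads r) => //=.
  by rewrite inE; move/headsP: h_head => ->.
rewrite /slot_weight card_heads_insert_max /= setU1_eq0 heads_succs addn0.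
rewrite elt_weight_insert_new ?setU1_eq0 //; last exact: insertable_after.
by case: (_ == k); rewrite ?mul1r ?mul0r.
Qed.

Lemma slot_weight_front h : h \in heads r ->
  slot_weight (front_slot r h) = (#|heads r| == k)%:R * b.
Proof.
move=> h_head; have heads_front : heads r :\: (h |: succs r h) = heads r :\ h.
  apply/setP => g; rewrite !in_setD andbC [in RHS]andbC.
  case g_head: (g \in heads r) => //=.
  by rewrite !inE; move/headsP: g_head => /(_ h) /negbTE ->; rewrite orbF.
rewrite /slot_weight card_heads_insert_max /= eqxx addn1 heads_front.
rewrite [in RHS](cardsD1 h) h_head add1n.
rewrite elt_weight_insert_new ?eqxx ?setU1_eq0 //; last exact: insertable_front.
by case: (_ == k); rewrite ?mul1r ?mul0r.
Qed.

Lemma sum_slot_weights :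
  \sum_(ps | is_list_partition (insert_max r ps.1 ps.2)) slot_weight ps =
  (#|heads r|.+1 == k)%:R + (#|heads r| == k)%:R * (a *+ n + b *+ #|heads r|).
Proof.
have new_list_notin : new_list_slot n \notin
    [set after_slot r m | m : 'I_n] :|: [set front_slot r h | h in heads r].
  rewrite !inE negb_or; apply/andP; split; apply/imsetP.
    by case=> m _ [] /eqP; rewrite eq_sym setU1_eq0.
  by case=> h _ [] /eqP; rewrite eq_sym setU1_eq0.
have after_front_disjoint :
    [disjoint [set after_slot r m | m : 'I_n] & [set front_slot r h | h in heads r]].
  rewrite -setI_eq0; apply/eqP/setP => ps; rewrite !inE.
  apply/negbTE/negP => /andP [/imsetP [m _ ->] /imsetP [h _ []]] /eqP.
  by rewrite setU1_eq0.
rewrite (eq_bigl [in [set ps | is_list_partition (insert_max r ps.1 ps.2)]]); last first.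
  by move=> ps; rewrite inE.
rewrite list_partition_insert_slots big_setU1 //= slot_weight_new_list; congr (_ + _).
rewrite (eq_bigl [predU [set after_slot r m | m : 'I_n] & [set front_slot r h | h in heads r]]);
  last by move=> ps; rewrite !inE.
rewrite bigU //= !big_imset /=; last 2 first.
- by move=> h1 h2 h1_head h2_head /front_slot_inj; apply.
- by move=> m1 m2 _ _ /after_slot_inj.
rewrite (eq_bigr _ (fun m _ => slot_weight_after m)) (eq_bigr _ slot_weight_front).
by rewrite !sumr_const card_ord mulrDr !mulrnAr.
Qed.

End SlotSum.

Section Recursion.
Variables (R : comNzRingType) (a b : R).

Lemma weight_sum_heads n k : weight_sum a b n k =
  \sum_(r : {set 'I_n * 'I_n} | is_list_partition r && (#|heads r| == k)) weight a b r.
Proof. by apply: eq_bigl => r; rewrite in_Omega. Qed.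

Variable n : nat.
Local Notation new := (@ord_max n).
Local Notation old := (lift new).

Definition restrict_max (r : {set 'I_n.+1 * 'I_n.+1}) :
    {set 'I_n * 'I_n} * ({set 'I_n} * {set 'I_n}) :=
  ([set p | (old p.1, old p.2) \in r],
   ([set i | (old i, new) \in r], [set i | (new, old i) \in r])).

Lemma restrict_maxK r P S : restrict_max (insert_max r P S) = (r, (P, S)).
Proof.
congr (_, (_, _)); apply/setP; last 2 first.
- by move=> i; rewrite inE insertE.
- by move=> i; rewrite inE insertE.
- by case=> i j; rewrite inE insertE.
Qed.

Lemma insert_maxK r : is_list_partition r ->
  let t := restrict_max r in insert_max t.1 t.2.1 t.2.2 = r.
Proof.
move=> r_lp; apply/setP => -[e f]; rewrite inE /=.
case: (unliftP new e) => [i|] ->; case: (unliftP new f) => [j|] ->;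
  rewrite ?liftK ?unlift_none ?inE //.
by rewrite (negbTE (lp_irrefl r_lp _)).
Qed.

Lemma sum_weight_insert_max (r : {set 'I_n * 'I_n}) k : is_list_partition r ->
  \sum_(ps | is_list_partition (insert_max r ps.1 ps.2) &&
             (#|heads (insert_max r ps.1 ps.2)| == k)) weight a b (insert_max r ps.1 ps.2) =
  weight a b r * ((#|heads r|.+1 == k)%:R + (#|heads r| == k)%:R * (a *+ n + b *+ #|heads r|)).
Proof.
move=> r_lp; rewrite -(sum_slot_weights r_lp) big_distrr big_mkcondr /=.
by apply: eq_bigr => ps _; rewrite /slot_weight weight_insert_max; case: ifP; rewrite ?mulr0.
Qed.

Lemma weight_sum_rec k : weight_sum a b n.+1 k =
  \sum_(r : {set 'I_n * 'I_n} | is_list_partition r) weight a b r *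
    ((#|heads r|.+1 == k)%:R + (#|heads r| == k)%:R * (a *+ n + b *+ #|heads r|)).
Proof.
rewrite weight_sum_heads (reindex_onto (fun t => insert_max t.1 t.2.1 t.2.2) restrict_max);
  last by move=> r /andP[r_lp _]; apply: insert_maxK.
rewrite (eq_bigl (fun t => is_list_partition (insert_max t.1 t.2.1 t.2.2) &&
                            (#|heads (insert_max t.1 t.2.1 t.2.2)| == k)));
  last by move=> [r [P S]]; rewrite restrict_maxK eqxx andbT.
rewrite -[LHS](pair_big_dep predT
  (fun r ps => is_list_partition (insert_max r ps.1 ps.2) &&
               (#|heads (insert_max r ps.1 ps.2)| == k))
  (fun r ps => weight a b (insert_max r ps.1 ps.2))) /= [RHS]big_mkcond /=.
apply: eq_bigr => r _; case r_lp : (is_list_partition r); first exact: sum_weight_insert_max.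
rewrite big_pred0 // => ps; apply/negbTE/negP => /andP [/list_partition_insert_inv [] ].
by rewrite r_lp.
Qed.

End Recursion.

Section WeightSum.
Variables (R : comNzRingType) (a b : R).

Lemma weight_sum_eq0 n k : (n < k)%N -> weight_sum a b n k = 0.
Proof.
move=> n_lt_k; rewrite weight_sum_heads big_pred0 // => r.
apply/negbTE/nandP; right; apply: contraTneq n_lt_k => <-.
by rewrite -leqNgt -[leqRHS]card_ord max_card.
Qed.

Lemma weight_sum0 k : weight_sum a b 0 k = (k == 0)%:R.
Proof.
have card0 (A : {set 'I_0}) : #|A| = 0%N.
  by apply/eqP; rewrite -leqn0 -[leqRHS](card_ord 0) max_card.
rewrite weight_sum_heads; case: k => [|k]; last first.
  by rewrite big_pred0 // => r; rewrite card0 andbF.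
rewrite (big_pred1 set0) ?/weight ?big_ord0 // => r /=.
rewrite card0 andbT; apply/idP/eqP => [_|->]; first by apply/setP => -[[]].
by apply/list_partitionP; split=> -[].
Qed.

Lemma weight_sumS n k : weight_sum a b n.+1 k =
  (if k is k'.+1 then weight_sum a b n k' else 0) +
  (n%:R * a + k%:R * b) * weight_sum a b n k.
Proof.
rewrite weight_sum_rec (eq_bigr (fun r => (if #|heads r|.+1 == k then weight a b r else 0) +
   (n%:R * a + k%:R * b) * (if #|heads r| == k then weight a b r else 0))); last first.
  move=> r _; rewrite mulrDr; congr (_ + _); first by case: (_ == k); rewrite ?mulr1 ?mulr0.
  by case: eqP => [<-|_]; rewrite ?mul1r ?mul0r ?mulr0 // mulrC !mulr_natl.
rewrite big_split -big_distrr -!big_mkcondr /= weight_sum_heads; congr (_ + _).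
case: k => [|k]; first by rewrite big_pred0 // => r; rewrite andbF.
by rewrite weight_sum_heads; apply: eq_bigl => r; rewrite eqSS.
Qed.

End WeightSum.

Section Polynomials.
Variables (R : comNzRingType) (a b : R).

Lemma rise_polyS n : rise_poly a n.+1 = rise_poly a n * ('X + (n%:R * a)%:P).
Proof. by rewrite /rise_poly big_ord_recr. Qed.

Lemma fall_polyS k : fall_poly b k.+1 = fall_poly b k * ('X - (k%:R * b)%:P).
Proof. by rewrite /fall_poly big_ord_recr. Qed.

Lemma fall_poly_mul_shift k c : fall_poly b k * ('X + c%:P) =
  fall_poly b k.+1 + (c + k%:R * b) *: fall_poly b k.
Proof.
by rewrite fall_polyS -mul_polyC [_%:P * _]mulrC -mulrDr polyCD addrCA subrK addrC.
Qed.

Lemma weight_sum_gstirling n : is_gstirling a b n (weight_sum a b n).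
Proof.
rewrite /is_gstirling; elim: n => [|n IHn].
  by rewrite /rise_poly big_ord0 big_ord1 weight_sum0 /fall_poly big_ord0 scale1r.
rewrite rise_polyS IHn mulr_suml.
under eq_bigr => k _ do rewrite -scalerAl fall_poly_mul_shift scalerDr scalerA.
under [RHS]eq_bigr => k _ do rewrite weight_sumS scalerDl.
rewrite !big_split /=; congr (_ + _).
  by rewrite [RHS]big_ord_recl /= scale0r add0r.
rewrite [RHS]big_ord_recr /= weight_sum_eq0 // mulr0 scale0r addr0.
by apply: eq_bigr => k _; rewrite mulrC.
Qed.

Lemma size_fall_poly k : size (fall_poly b k) = k.+1.
Proof.
rewrite size_prod_XsubC; congr _.+1.
by rewrite -[RHS](card_ord k) cardT enumT /index_enum [locked_with _ _]unlock.
Qed.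

Lemma fall_poly_monic k : fall_poly b k \is monic.
Proof. exact: monic_prod_XsubC. Qed.

End Polynomials.

Lemma monic_combination_eq0 (R : nzRingType) (p : nat -> {poly R}) (d : nat -> R) m :
    (forall k, p k \is monic) -> (forall k, size (p k) = k.+1) ->
  \sum_(k < m) d k *: p k = 0 -> forall k, (k < m)%N -> d k = 0.
Proof.
move=> p_monic size_p; elim: m => [|m IHm] // sum_eq0 k.
rewrite big_ord_recr /= in sum_eq0.
have dm_eq0 : d m = 0.
  have /(congr1 (fun q : {poly R} => q`_m)) := sum_eq0.
  have lead_pm : (p m)`_m = 1 by rewrite -(monicP (p_monic m)) lead_coefE size_p.
  rewrite coefD coefZ coef0 coef_sum lead_pm mulr1 big1 ?add0r // => i _.
  by rewrite coefZ nth_default ?mulr0 // size_p.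
rewrite ltnS leq_eqVlt => /predU1P [-> //|k_lt_m].
by apply: IHm k_lt_m; rewrite dm_eq0 scale0r addr0 in sum_eq0.
Qed.

Theorem theorem1 (R : fieldType) (alpha beta : R) (n : nat) :
  is_gstirling alpha beta n (fun k => weight_sum alpha beta n k) /\
  (forall c : nat -> R, is_gstirling alpha beta n c ->
     forall k : nat, (if (k <= n)%N then c k else 0) = weight_sum alpha beta n k).
Proof.
split=> [|c c_gstirling k]; first exact: weight_sum_gstirling.
case: leqP => [k_le_n|n_lt_k]; last by rewrite weight_sum_eq0.
apply/eqP; rewrite -subr_eq0; apply/eqP; move: k k_le_n.
apply: (monic_combination_eq0 (d := fun k => c k - weight_sum alpha beta n k) (m := n.+1)
  (fall_poly_monic beta) (size_fall_poly beta)).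
rewrite (eq_bigr _ (fun k _ => scalerBl _ _ _)) sumrB -c_gstirling.
by rewrite -(weight_sum_gstirling alpha beta n) subrr.
Qed.
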